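(* Let $T$ be a non-empty compact Hausdorff space and $M$ a pseudo MV-algebra. The kernel of a $(C(T),1_T)$-state-morphism $s$ on $M$ is a maximal ideal of $M$ if and only if there is a state-morphism $s_0$ on $M$ such that $s(x)=s_0(x)1_T$ for all $x\in M$. The same statement holds with $C(T)$ replaced by $C_b(T)$, the Riesz space of bounded real-valued functions on $T$.
   Context: $C(T)$ is the Riesz space of continuous real-valued functions on $T$ with pointwise order; $1_T$ is the constant function $1$. Pseudo MV-algebra: an algebra $(M;\oplus,{}^-,{}^\sim,0,1)$, $0\neq1$, satisfying the standard pseudo MV-algebra axioms; equivalently (up to isomorphism) $M=\Gamma(G,u)=[0,u]$ for a unital $\ell$-group $(G,u)$ with $x\oplus y=(x+y)\wedge u$, $x^-=u-x$, $x^\sim=-x+u$. Ideal: nonempty down-set closed under $\oplus$; maximal = maximal among proper ideals. For a unital Riesz space $(R,1_R)$, $\Gamma(R,1_R)$ is the MV-algebra on $[0,1_R]$, and an $(R,1_R)$-state-morphism is a pseudo MV-algebra homomorphism $M\to\Gamma(R,1_R)$; a state-morphism is an $(\mathbb R,1)$-state-morphism. $\mathrm{Ker}(s)=\{x:s(x)=0\}$. *)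

From Stdlib Require Import Reals List.
Open Scope R_scope.

Record TopSpace := {
  pt :> Type;
  is_open : (pt -> Prop) -> Prop;
  open_full : is_open (fun _ => True);
  open_inter : forall U V, is_open U -> is_open V -> is_open (fun x => U x /\ V x);
  open_union : forall F : (pt -> Prop) -> Prop,
      (forall U, F U -> is_open U) -> is_open (fun x => exists U, F U /\ U x)
}.

Definition compact_space (T : TopSpace) : Prop :=
  forall F : (T -> Prop) -> Prop,
    (forall U, F U -> is_open T U) ->
    (forall x : T, exists U, F U /\ U x) ->
    exists l : list (T -> Prop),
      (forall U, In U l -> F U) /\ (forall x : T, exists U, In U l /\ U x).

Definition hausdorff_space (T : TopSpace) : Prop :=
  forall x y : T, x <> y -> exists U V, is_open T U /\ is_open T V /\ U x /\ V y /\
    (forall z, ~ (U z /\ V z)).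

Definition R_open (W : R -> Prop) : Prop :=
  forall r, W r -> exists eps, eps > 0 /\ forall r', Rabs (r' - r) < eps -> W r'.

Definition continuous_on (T : TopSpace) (f : T -> R) : Prop :=
  forall W, R_open W -> is_open T (fun t => W (f t)).

Definition bounded_fun (T : Type) (f : T -> R) : Prop :=
  exists K, forall t, Rabs (f t) <= K.

Record PseudoMV := {
  carr :> Type;
  pmv_oplus : carr -> carr -> carr;
  pmv_neg : carr -> carr;
  pmv_tilde : carr -> carr;
  pmv_zero : carr;
  pmv_one : carr;
  pmv_nontriv : pmv_zero <> pmv_one;
  pmv_A1 : forall x y z, pmv_oplus x (pmv_oplus y z) = pmv_oplus (pmv_oplus x y) z;
  pmv_A2 : forall x, pmv_oplus x pmv_zero = x /\ pmv_oplus pmv_zero x = x;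
  pmv_A3 : forall x, pmv_oplus x pmv_one = pmv_one /\ pmv_oplus pmv_one x = pmv_one;
  pmv_A4 : pmv_tilde pmv_one = pmv_zero /\ pmv_neg pmv_one = pmv_zero;
  pmv_A5 : forall x y, pmv_tilde (pmv_oplus (pmv_neg x) (pmv_neg y))
                     = pmv_neg (pmv_oplus (pmv_tilde x) (pmv_tilde y));
  pmv_A6 : forall x y,
    let odot := fun a b => pmv_tilde (pmv_oplus (pmv_neg a) (pmv_neg b)) in
    pmv_oplus x (odot (pmv_tilde x) y) = pmv_oplus y (odot (pmv_tilde y) x) /\
    pmv_oplus y (odot (pmv_tilde y) x) = pmv_oplus (odot x (pmv_neg y)) y /\
    pmv_oplus (odot x (pmv_neg y)) y = pmv_oplus (odot y (pmv_neg x)) x;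
  pmv_A7 : forall x y,
    let odot := fun a b => pmv_tilde (pmv_oplus (pmv_neg a) (pmv_neg b)) in
    odot x (pmv_oplus (pmv_neg x) y) = odot (pmv_oplus x (pmv_tilde y)) y;
  pmv_A8 : forall x, pmv_tilde (pmv_neg x) = x
}.

Arguments pmv_oplus {_}. Arguments pmv_neg {_}. Arguments pmv_tilde {_}.
Arguments pmv_zero {_}. Arguments pmv_one {_}.

Definition pmv_le (M : PseudoMV) (x y : M) : Prop := pmv_oplus (pmv_neg x) y = pmv_one.

Definition is_ideal (M : PseudoMV) (I : M -> Prop) : Prop :=
  (exists x, I x) /\
  (forall x y, pmv_le M x y -> I y -> I x) /\
  (forall x y, I x -> I y -> I (pmv_oplus x y)).

Definition is_maximal_ideal (M : PseudoMV) (I : M -> Prop) : Prop :=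
  is_ideal M I /\ (exists x, ~ I x) /\
  (forall J, is_ideal M J -> (exists x, ~ J x) -> (forall x, I x -> J x) ->
     forall x, J x -> I x).

(* pseudo MV-algebra homomorphism M -> Gamma(R,1) = [0,1] with
   x (+) y = min(x+y,1), x^- = x^~ = 1 - x *)
Definition is_state_morphism (M : PseudoMV) (s : M -> R) : Prop :=
  (forall x, 0 <= s x <= 1) /\
  (forall x y, s (pmv_oplus x y) = Rmin (s x + s y) 1) /\
  (forall x, s (pmv_neg x) = 1 - s x) /\
  (forall x, s (pmv_tilde x) = 1 - s x) /\
  s pmv_zero = 0 /\ s pmv_one = 1.

(* (R_T, 1_T)-state-morphism, where R_T is a Riesz space of real functions on T
   described by the membership predicate [inR]; Gamma(R_T,1_T) consists of
   the f in R_T with 0 <= f <= 1_T, operations pointwise. *)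
Definition is_fun_state_morphism (T : Type) (inR : (T -> R) -> Prop)
    (M : PseudoMV) (s : M -> T -> R) : Prop :=
  (forall x, inR (s x) /\ forall t, 0 <= s x t <= 1) /\
  (forall x y t, s (pmv_oplus x y) t = Rmin (s x t + s y t) 1) /\
  (forall x t, s (pmv_neg x) t = 1 - s x t) /\
  (forall x t, s (pmv_tilde x) t = 1 - s x t) /\
  (forall t, s pmv_zero t = 0) /\ (forall t, s pmv_one t = 1).

Definition is_CT_state_morphism (T : TopSpace) (M : PseudoMV) (s : M -> T -> R) :=
  is_fun_state_morphism T (continuous_on T) M s.

Definition is_CbT_state_morphism (T : TopSpace) (M : PseudoMV) (s : M -> T -> R) :=
  is_fun_state_morphism T (bounded_fun T) M s.

Definition Ker_fun (T : Type) (M : PseudoMV) (s : M -> T -> R) : M -> Prop :=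
  fun x => s x = (fun _ => 0).

(* Every coordinate t |-> s(.)(t) of a function-valued state-morphism s is a
   state-morphism, and the kernel of a state-morphism is a maximal ideal.  As
   Ker(s) is the intersection of the kernels of the coordinates, Ker(s) is
   maximal iff it equals the kernel of every coordinate.  Finally a
   state-morphism is determined by its kernel: if a(x) < b(x), replacing x by
   x (+) x (when both values are at most 1/2) or by x (.) x (when both exceed
   1/2) doubles the gap b - a, which cannot go on forever inside [0,1]; and if
   a(x) <= 1/2 < b(x), then x (.) x is killed by a but not by b. *)

From Stdlib Require Import Reals List.
From Stdlib Require Import Lra FunctionalExtensionality.
Open Scope R_scope.

Definition pmv_odot (M : PseudoMV) (x y : M) : M :=
  pmv_tilde (pmv_oplus (pmv_neg x) (pmv_neg y)).

(* [pmv_nmul M x n] is the (n+1)-fold sum x (+) ... (+) x. *)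
Fixpoint pmv_nmul (M : PseudoMV) (x : M) (n : nat) : M :=
  match n with O => x | S k => pmv_oplus (pmv_nmul M x k) x end.

Lemma pmv_negl_oplus (M : PseudoMV) (y : M) : pmv_oplus (pmv_neg y) y = pmv_one.
Proof.
  destruct (pmv_A6 M pmv_one y) as [E1 [E2 _]]; cbv zeta in E1, E2.
  rewrite (proj2 (pmv_A4 M)) in E1, E2.
  rewrite (proj2 (pmv_A2 M _)), (pmv_A8 M) in E2.
  rewrite (proj1 (pmv_A2 M _)) in E1, E2.
  rewrite <- E2, <- E1. apply (proj2 (pmv_A3 M _)).
Qed.

Lemma pmv_le_one (M : PseudoMV) (x : M) : pmv_le M x pmv_one.
Proof. apply (proj1 (pmv_A3 M _)). Qed.

Section StateMorphism.

Variable M : PseudoMV.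

Lemma state_morphism_odot_diag (s : M -> R) (x : M) : is_state_morphism M s ->
  s (pmv_odot M x x) = Rmax (2 * s x - 1) 0.
Proof.
  intros (B & Ho & Hn & Ht & _). unfold pmv_odot. rewrite Ht, Ho, !Hn.
  specialize (B x). unfold Rmin, Rmax; repeat destruct Rle_dec; lra.
Qed.

Lemma state_morphism_oplus_diag (s : M -> R) (x : M) : is_state_morphism M s ->
  s (pmv_oplus x x) = Rmin (2 * s x) 1.
Proof. intros (_ & Ho & _). rewrite Ho. f_equal. ring. Qed.

Lemma state_morphism_nmul (s : M -> R) (x : M) : is_state_morphism M s ->
  forall n, s (pmv_nmul M x n) = Rmin (INR (S n) * s x) 1.
Proof.
  intros Hs n. pose proof (proj1 Hs x) as B.
  induction n as [|n IH]; simpl pmv_nmul.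
  - change (INR 1) with 1. unfold Rmin; destruct Rle_dec; lra.
  - rewrite (proj1 (proj2 Hs)), IH, (S_INR (S n)).
    unfold Rmin; repeat destruct Rle_dec; nra.
Qed.

Lemma state_morphism_nmul_one (s : M -> R) (x : M) : is_state_morphism M s ->
  0 < s x -> exists n, s (pmv_nmul M x n) = 1.
Proof.
  intros Hs Hx. destruct (INR_unbounded (/ s x)) as [n Hn].
  exists n. rewrite (state_morphism_nmul s x Hs), S_INR.
  assert (1 < INR n * s x).
  { apply (Rmult_lt_compat_r (s x)) in Hn; auto. rewrite Rinv_l in Hn; lra. }
  unfold Rmin; destruct Rle_dec; lra.
Qed.

Lemma state_morphism_ker_ideal (s : M -> R) : is_state_morphism M s ->
  is_ideal M (fun x => s x = 0).
Proof.
  intros (B & Ho & Hn & _ & Z & O). split; [|split].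
  - exists pmv_zero. exact Z.
  - intros x y Hle Hy. unfold pmv_le in Hle.
    apply (f_equal s) in Hle. rewrite Ho, Hn, O, Hy in Hle.
    specialize (B x). unfold Rmin in Hle; destruct Rle_dec in Hle; lra.
  - intros x y Hx Hy. rewrite Ho, Hx, Hy. unfold Rmin; destruct Rle_dec; lra.
Qed.

(* An ideal J containing x with s x > 0 contains some n.x with s (n.x) = 1;
   then (n.x)^- lies in Ker(s), and (n.x)^- (+) n.x = 1 puts 1 in J. *)
Lemma state_morphism_ker_maximal (s : M -> R) (I : M -> Prop) :
  is_state_morphism M s -> (forall x, I x <-> s x = 0) -> is_maximal_ideal M I.
Proof.
  intros Hs HI. pose proof (state_morphism_ker_ideal s Hs) as (Ine & Idown & Iplus).
  split; [split; [|split]|split].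
  - destruct Ine as [x Hx]. exists x. apply HI, Hx.
  - intros x y Hle Hy. apply HI. apply (Idown x y Hle), HI, Hy.
  - intros x y Hx Hy. apply HI. apply Iplus; apply HI; assumption.
  - exists pmv_one. rewrite HI. destruct Hs as (_ & _ & _ & _ & _ & O). lra.
  - intros J (_ & Jdown & Jplus) [w Hw] Hsub x Jx. apply HI.
    destruct (Req_dec (s x) 0) as [E|E]; [exact E|exfalso].
    assert (Hx : 0 < s x) by (pose proof (proj1 Hs x); lra).
    destruct (state_morphism_nmul_one s x Hs Hx) as [n Hn].
    assert (Jn : forall k, J (pmv_nmul M x k)) by (induction k; simpl; auto).
    assert (Jneg : J (pmv_neg (pmv_nmul M x n))).
    { apply Hsub, HI. destruct Hs as (_ & _ & Hneg & _). rewrite Hneg, Hn. lra. }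
    apply Hw, (Jdown w pmv_one (pmv_le_one M w)).
    rewrite <- (pmv_negl_oplus M (pmv_nmul M x n)). apply Jplus; auto.
Qed.

Section SameKernel.

Variables a b : M -> R.
Hypothesis Ha : is_state_morphism M a.
Hypothesis Hb : is_state_morphism M b.
Hypothesis same_ker : forall z, a z = 0 <-> b z = 0.

Lemma state_morphism_gap_double (x : M) : a x < b x ->
  exists y, b y - a y = 2 * (b x - a x).
Proof.
  intros Hlt. pose proof (proj1 Ha x). pose proof (proj1 Hb x).
  destruct (Rle_dec (a x) (1/2)); [destruct (Rle_dec (b x) (1/2))|].
  - exists (pmv_oplus x x).
    rewrite (state_morphism_oplus_diag a x Ha), (state_morphism_oplus_diag b x Hb).
    unfold Rmin; repeat destruct Rle_dec; lra.
  - exfalso.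
    assert (E : a (pmv_odot M x x) = 0).
    { rewrite (state_morphism_odot_diag a x Ha). unfold Rmax; destruct Rle_dec; lra. }
    apply same_ker in E. rewrite (state_morphism_odot_diag b x Hb) in E.
    unfold Rmax in E; destruct Rle_dec in E; lra.
  - exists (pmv_odot M x x).
    rewrite (state_morphism_odot_diag a x Ha), (state_morphism_odot_diag b x Hb).
    unfold Rmax; repeat destruct Rle_dec; lra.
Qed.

Lemma state_morphism_gap_pow2 (x : M) : a x < b x ->
  forall n, exists y, b y - a y = 2 ^ n * (b x - a x).
Proof.
  intros Hlt n. induction n as [|n [y Hy]].
  - exists x. simpl. ring.
  - destruct (state_morphism_gap_double y) as [z Hz].
    + assert (0 < 2 ^ n) by (apply pow_lt; lra). nra.
    + exists z. rewrite Hz, Hy. simpl. ring.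
Qed.

Lemma state_morphism_not_lt_of_ker (x : M) : ~ a x < b x.
Proof.
  intros Hlt. set (d := b x - a x). assert (Hd : 0 < d) by (unfold d; lra).
  destruct (Pow_x_infinity 2 ltac:(rewrite Rabs_pos_eq; lra) (2 / d)) as [n Hn].
  specialize (Hn n (le_n n)). rewrite Rabs_pos_eq in Hn by (apply pow_le; lra).
  destruct (state_morphism_gap_pow2 x Hlt n) as [y Hy].
  pose proof (proj1 Ha y). pose proof (proj1 Hb y).
  assert (2 <= 2 ^ n * d).
  { apply (Rmult_ge_compat_r d) in Hn; [|lra].
    unfold Rdiv in Hn. rewrite Rmult_assoc, Rinv_l in Hn; lra. }
  fold d in Hy. lra.
Qed.

End SameKernel.

Lemma state_morphism_eq_of_ker (a b : M -> R) :
  is_state_morphism M a -> is_state_morphism M b ->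
  (forall z, a z = 0 <-> b z = 0) -> forall x, a x = b x.
Proof.
  intros Ha Hb Hab x.
  destruct (Rtotal_order (a x) (b x)) as [Hlt|[E|Hgt]]; [exfalso| |exfalso].
  - exact (state_morphism_not_lt_of_ker a b Ha Hb Hab x Hlt).
  - exact E.
  - refine (state_morphism_not_lt_of_ker b a Hb Ha _ x Hgt).
    intros z. symmetry. apply Hab.
Qed.

End StateMorphism.

Section FunStateMorphism.

Variables (T : Type) (inR : (T -> R) -> Prop) (M : PseudoMV) (s : M -> T -> R).
Hypothesis Hs : is_fun_state_morphism T inR M s.

Lemma fun_state_morphism_eval (t : T) : is_state_morphism M (fun x => s x t).
Proof.
  destruct Hs as (B & Ho & Hn & Ht & Z & O).
  repeat split; auto; apply B.
Qed.

Lemma Ker_fun_evalP : is_maximal_ideal M (Ker_fun T M s) ->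
  forall t z, s z t = 0 <-> Ker_fun T M s z.
Proof.
  intros (_ & _ & Hmax) t z. split.
  - destruct (state_morphism_ker_maximal M (fun x => s x t) (fun x => s x t = 0)
      (fun_state_morphism_eval t) (fun _ => iff_refl _)) as (Hid & Hproper & _).
    apply (Hmax _ Hid Hproper).
    intros y Hy. rewrite Hy. reflexivity.
  - intros Hz. rewrite Hz. reflexivity.
Qed.

Lemma Ker_fun_constP (t0 : T) (s0 : M -> R) : (forall x, s x = (fun _ => s0 x)) ->
  forall x, Ker_fun T M s x <-> s0 x = 0.
Proof.
  intros Hconst x. unfold Ker_fun. rewrite Hconst. split.
  - intros E. exact (f_equal (fun f => f t0) E).
  - intros E. rewrite E. reflexivity.
Qed.

Theorem fun_state_morphism_ker_maximalP : inhabited T ->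
  is_maximal_ideal M (Ker_fun T M s) <->
  exists s0 : M -> R, is_state_morphism M s0 /\ forall x, s x = (fun _ => s0 x).
Proof.
  intros [t0]. split.
  - intros Hmax. exists (fun x => s x t0). split; [apply fun_state_morphism_eval|].
    intros x. apply functional_extensionality. intros t.
    apply (state_morphism_eq_of_ker M (fun x => s x t) (fun x => s x t0));
      try apply fun_state_morphism_eval.
    intros z. rewrite !(Ker_fun_evalP Hmax). reflexivity.
  - intros (s0 & Hs0 & Hconst).
    exact (state_morphism_ker_maximal M s0 _ Hs0 (Ker_fun_constP t0 s0 Hconst)).
Qed.

End FunStateMorphism.

Theorem proposition3p21 (T : TopSpace) (M : PseudoMV)
  (HTne : inhabited (pt T)) (HTc : compact_space T) (HTh : hausdorff_space T) :
  (forall s : M -> T -> R, is_CT_state_morphism T M s ->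
     (is_maximal_ideal M (Ker_fun T M s) <->
      exists s0 : M -> R, is_state_morphism M s0 /\
        forall x, s x = (fun _ => s0 x))) /\
  (forall s : M -> T -> R, is_CbT_state_morphism T M s ->
     (is_maximal_ideal M (Ker_fun T M s) <->
      exists s0 : M -> R, is_state_morphism M s0 /\
        forall x, s x = (fun _ => s0 x))).
Proof.
  split; intros s Hs; exact (fun_state_morphism_ker_maximalP _ _ M s Hs HTne).
Qed.
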